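(* Let $X$ be a real Banach space with $\dim X\ge 2$ and let $\alpha,\beta>0$. Let $(f_n)$ be a sequence in $B_{X^*}$ and $(x_n)$ a sequence in $B_X$ such that $\lim_{n\to\infty}f_n(x_n)=1$. Then for any sequence $(g_n)$ in $B_{X^*}$ with $\liminf_{n\to\infty}g_n(x_n)>0$, $$DW(X,\alpha,\beta)\ge(\alpha+\beta)\max\left\{\liminf_{n\to\infty}\|g_n(x_n)f_n-g_n\|,\,1\right\}\ge(\alpha+\beta)\max\left\{\liminf_{n\to\infty}g_n(x_n)\|f_n-g_n\|,\,1\right\}.$$
   Context: $B_X$ and $B_{X^*}$ denote the closed unit balls of $X$ and of its dual $X^*$. For $\alpha,\beta>0$, $$DW(X,\alpha,\beta)=\sup\left\{\frac{\alpha\|x\|+\beta\|y\|}{\|x-y\|}\left\|\frac{x}{\|x\|}-\frac{y}{\|y\|}\right\|: x,y\in X\setminus\{0\},\ x\neq y\right\}.$$ *)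

From HB Require Import structures.
From mathcomp Require Import all_boot all_order all_algebra.
From mathcomp Require Import all_classical all_reals all_analysis.
Set Implicit Arguments. Unset Strict Implicit. Unset Printing Implicit Defensive.
Import Order.TTheory GRing.Theory Num.Theory.
Import numFieldNormedType.Exports.
Local Open Scope classical_set_scope.
Local Open Scope ring_scope.

Definition dim_ge2 (R : realType) (X : normedModType R) : Prop :=
  exists x y : X, forall a b : R, a *: x + b *: y = 0 -> a = 0 /\ b = 0.

(* f : X -> R is a linear functional of norm <= 1, i.e. f \in B_{X^*}
   (boundedness by the norm makes it continuous). *)
Definition in_dual_ball (R : realType) (X : normedModType R) (f : X -> R) : Prop :=
  (forall (a : R) (x y : X), f (a *: x + y) = a * f x + f y) /\
  (forall x : X, `|f x| <= `|x|).

Definition in_ball (R : realType) (X : normedModType R) (x : X) : Prop :=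
  `|x| <= 1.

Definition dual_norm (R : realType) (X : normedModType R) (f : X -> R) : R :=
  sup [set `|f x| | x in [set x : X | `|x| <= 1]].

(* DW(X, alpha, beta), valued in the extended reals (the sup may be +oo) *)
Definition DW (R : realType) (X : normedModType R) (alpha beta : R) : \bar R :=
  ereal_sup [set r : \bar R | exists x y : X,
     [/\ x != 0, y != 0, x != y &
      r = ((alpha * `|x| + beta * `|y|) / `|x - y|
            * `| (`|x|^-1 *: x - `|y|^-1 *: y) |)%:E]].

From HB Require Import structures.
From mathcomp Require Import all_boot all_order all_algebra.
From mathcomp Require Import all_classical all_reals all_analysis.
From mathcomp Require Import ring lra.
Import Order.TTheory GRing.Theory Num.Theory.
Import numFieldNormedType.Exports.
Local Open Scope classical_set_scope.
Local Open Scope ring_scope.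

(* The pair (v, -v) already gives DW >= alpha + beta.  For the liminf term, take n
   so large that f_n(x_n) ~ 1, g_n(x_n) > 0 and some z in B_X has gap
   h = g_n(x_n) f_n(z) - g_n(z) beyond the liminf.  For the pair (x_n + s z, x_n)
   with s small, testing g_n on the difference of the normalized vectors produces
   s h up to O(s^2), so the DW-quotient of this pair is at least
   (alpha + beta (1 - s)) (h - s).  The second inequality is pointwise:
   c |a - b| <= max(|c a - b|, 1) whenever 0 < c <= 1 and |a|, |b| <= 1. *)

Section DualBall.
Context {R : realType} {X : normedModType R} {f : X -> R}.
Hypothesis hf : in_dual_ball f.

Lemma dual_ball0 : f 0 = 0.
Proof. by have := hf.2 0; rewrite normr0 normr_le0 => /eqP. Qed.

Lemma dual_ballD y z : f (y + z) = f y + f z.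
Proof. by have := hf.1 1 y z; rewrite scale1r mul1r. Qed.

Lemma dual_ballZ a z : f (a *: z) = a * f z.
Proof. by have := hf.1 a z 0; rewrite addr0 dual_ball0 addr0. Qed.

Lemma dual_ballN z : f (- z) = - f z.
Proof. by rewrite -scaleN1r dual_ballZ mulN1r. Qed.

Lemma dual_ballB y z : f (y - z) = f y - f z.
Proof. by rewrite dual_ballD dual_ballN. Qed.

Lemma dual_ball_le_norm z : f z <= `|z|.
Proof. exact: le_trans (ler_norm _) (hf.2 z). Qed.

Lemma dual_ball_ge_Nnorm z : - `|z| <= f z.
Proof. by rewrite lerNl -dual_ballN -normrN dual_ball_le_norm. Qed.

End DualBall.

Section DualNorm.
Context {R : realType} {X : normedModType R}.
Implicit Type h : X -> R.

Let unit_ball_image_neq0 h : [set `|h z| | z in [set z : X | `|z| <= 1]] !=set0.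
Proof. by exists `|h 0|, 0; rewrite //= normr0. Qed.

Lemma dual_norm_ge h K z : (forall w : X, `|w| <= 1 -> `|h w| <= K) ->
  `|z| <= 1 -> `|h z| <= dual_norm h.
Proof.
move=> hK z1; apply: ub_le_sup; last by exists z.
by exists K => _ [w w1 <-]; apply: hK.
Qed.

Lemma dual_norm_le h M : (forall w : X, `|w| <= 1 -> `|h w| <= M) ->
  dual_norm h <= M.
Proof. by move=> hM; apply: ge_sup => // _ [w w1 <-]; apply: hM. Qed.

Lemma dual_norm_gt_odd h r : (forall z, h (- z) = - h z) ->
  r < dual_norm h -> exists2 z : X, `|z| <= 1 & r < h z.
Proof.
move=> hN /(sup_gt (unit_ball_image_neq0 h))[_ [z z1 <-] rz].
have [hz0|hz0] := lerP 0 (h z); first by exists z; rewrite // -(ger0_norm hz0).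
by exists (- z); rewrite ?normrN // hN -(ltr0_norm hz0).
Qed.

End DualNorm.

Section ExtendedReals.
Context {R : realType}.
Local Open Scope ereal_scope.
Implicit Type u : (\bar R)^nat.

Lemma lte_ereal_between {a b : \bar R} : a < b -> exists r : R, a < r%:E < b.
Proof.
case: a => [a| |]; case: b => [b| |] //= ab.
- by exists ((a + b) / 2)%R; rewrite !lte_fin in ab *; apply/andP; split; lra.
- by exists (a + 1)%R; rewrite ltry lte_fin andbT; lra.
- by exists (b - 1)%R; rewrite ltNyr lte_fin; lra.
- by exists 0%R; rewrite ltNyr ltry.
Qed.

Lemma lee_of_fin_lt {a b : \bar R} : (forall r : R, r%:E < a -> r%:E <= b) -> a <= b.
Proof.
move=> H; rewrite leNgt; apply/negP => /lte_ereal_between[r /andP[br ra]].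
by have := lt_le_trans br (H r ra); rewrite ltxx.
Qed.

Lemma lte_fin_dense {r : R} {a : \bar R} :
  r%:E < a -> exists2 s : R, (r < s)%R & s%:E < a.
Proof. by move=> /lte_ereal_between[s /andP[rs sa]]; exists s; rewrite -?lte_fin. Qed.

Lemma limn_einf_gt {u} {r : R} : r%:E < limn_einf u -> \forall n \near \oo, r%:E < u n.
Proof.
rewrite limn_einf_lim (cvg_lim _ (@cvg_einfs_sup R u)) //.
move=> /ereal_sup_gt[_ [N _ <-]] ru; exists N => // n /= Nn.
by apply: (lt_le_trans ru); apply: ereal_inf_lbound; exists n.
Qed.

Lemma limn_einf_ge {u} {r : R} : (\forall n \near \oo, r%:E <= u n) -> r%:E <= limn_einf u.
Proof.
move=> [N _ ru]; rewrite limn_einf_lim (cvg_lim _ (@cvg_einfs_sup R u)) //.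
apply: le_trans (ereal_sup_ubound _); last by exists N.
by apply/ereal_infP => _ [n Nn <-]; apply: ru.
Qed.

End ExtendedReals.

Lemma scaled_dist_le_max {R : realDomainType} (a b c : R) :
  0 < c <= 1 -> `|a| <= 1 -> `|b| <= 1 -> c * `|a - b| <= Num.max `|c * a - b| 1.
Proof.
move=> /andP[c0 c1] /ler_normlP[a1 a2] /ler_normlP[b1 b2].
rewrite le_max; have [ab|ab] := lerP 0 (a - b); [rewrite ger0_norm // | rewrite ltr0_norm //].
- have [b0|b0] := lerP 0 b; [apply/orP; right | apply/orP; left]; first by nra.
  by apply: le_trans (ler_norm _); nra.
- have [b0|b0] := lerP b 0; [apply/orP; right | apply/orP; left]; first by nra.
  by rewrite -normrN; apply: le_trans (ler_norm _); nra.
Qed.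

Lemma dual_norm_scaled_sub_le (R : realType) (X : normedModType R) (F G : X -> R) c :
  in_dual_ball F -> in_dual_ball G -> 0 < c <= 1 ->
  c * dual_norm (fun z => F z - G z) <=
  Num.max (dual_norm (fun z => c * F z - G z)) 1.
Proof.
move=> hF hG /[dup] c01 /andP[c0 c1]; rewrite mulrC -ler_pdivlMr //.
apply: dual_norm_le => w w1; rewrite ler_pdivlMr // [_ * c]mulrC.
have Fw1 := le_trans (hF.2 w) w1; have Gw1 := le_trans (hG.2 w) w1.
apply: le_trans (scaled_dist_le_max (F w) (G w) c c01 Fw1 Gw1) (le_max2 _ (lexx _)).
apply: (@dual_norm_ge _ _ (fun z => c * F z - G z) 2) => // z z1.
apply: le_trans (ler_normB _ _) _; rewrite normrM (gtr0_norm c0).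
have := le_trans (hF.2 z) z1; have := le_trans (hG.2 z) z1; have := normr_ge0 (F z); nra.
Qed.

Section DWLowerBounds.
Context {R : realType} {X : normedModType R} (alpha beta : R).

Lemma DW_ge_pair (x y : X) : x != 0 -> y != 0 -> x != y ->
  (((alpha * `|x| + beta * `|y|) / `|x - y|
     * `| `|x|^-1 *: x - `|y|^-1 *: y |)%:E <= DW X alpha beta)%E.
Proof. by move=> x0 y0 xy; apply: ereal_sup_ubound; exists x, y. Qed.

Lemma DW_ge_add : dim_ge2 X -> ((alpha + beta)%:E <= DW X alpha beta)%E.
Proof.
move=> [v [w indep]].
have v0 : v != 0.
  apply/eqP => v0; have [/eqP] := indep 1 0 ltac:(by rewrite v0 scaler0 scale0r addr0).
  by rewrite oner_eq0.
have vNv : v != - v.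
  by rewrite -subr_eq0 opprK -mulr2n -scaler_nat scaler_eq0 pnatr_eq0.
apply: le_trans (DW_ge_pair v (- v) v0 _ vNv); last by rewrite oppr_eq0.
have nv0 : `|v| != 0 by rewrite normr_eq0.
rewrite lee_fin normrN !opprK scalerN opprK -!mulr2n !normrMn normrZ.
rewrite ger0_norm ?invr_ge0 // mulVf // -mulrDl -mulr_natr invfM !mulrA.
by rewrite mulfK // mulfVK // pnatr_eq0.
Qed.

End DWLowerBounds.

Section Perturbation.
Context {R : realType} {X : normedModType R}.

Lemma dual_ball_normalized_sub_le {G : X -> R} (x y : X) : in_dual_ball G ->
  `|x|^-1 * G x - `|y|^-1 * G y <= `| `|y|^-1 *: y - `|x|^-1 *: x |.
Proof.
by move=> hG; rewrite distrC -!(dual_ballZ hG) -(dual_ballB hG) dual_ball_le_norm.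
Qed.

(* With [u = x + s z], the left side is a lower bound for [G] tested on
   [x / |x| - u / |u|], times [|u|]; [F x ~ 1] keeps the error of order [s ^+ 2]. *)
Lemma perturbation_gap_le {F G : X -> R} {x z : X} {s : R} :
  in_dual_ball F -> in_dual_ball G -> `|x| <= 1 -> 0 <= G x ->
  x != 0 -> x + s *: z != 0 -> 1 - s ^+ 2 <= F x ->
  s * (G x * F z - G z - s) <=
    `| `|x + s *: z|^-1 *: (x + s *: z) - `|x|^-1 *: x | * `|x + s *: z|.
Proof.
move=> hF hG x1 Gx_ge0 x0 u0 Fx_ge; set u := x + s *: z; set c := G x.
have nu_gt0 : 0 < `|u| by rewrite normr_gt0.
have Gx_le1 : c <= 1 := le_trans (dual_ball_le_norm hG x) x1.
have inv_x_ge1 : 1 <= `|x|^-1 by rewrite invf_ge1 ?normr_gt0.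
have cu_ge0 : 0 <= c * `|u| by apply: mulr_ge0.
have cFu : c * F u <= c * `|u| by rewrite ler_wpM2l // dual_ball_le_norm.
have Fu : F u = F x + s * F z by rewrite dual_ballD // dual_ballZ.
have Gu : G u = c + s * G z by rewrite dual_ballD // dual_ballZ.
have N_ge := ler_wpM2r (ltW nu_gt0) (dual_ball_normalized_sub_le x u hG).
have NE : (`|x|^-1 * c - `|u|^-1 * G u) * `|u| = `|x|^-1 * (c * `|u|) - G u.
  by field; rewrite !normr_eq0 x0.
have s2c : c * s ^+ 2 <= s ^+ 2 by rewrite ler_piMl ?sqr_ge0.
have cFx : c * (1 - s ^+ 2) <= c * F x by rewrite ler_wpM2l.
have cu_le : c * `|u| <= `|x|^-1 * (c * `|u|) by rewrite ler_peMl.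
rewrite NE Gu in N_ge; rewrite Fu in cFu; nra.
Qed.

Lemma DW_ge_perturbation {alpha beta : R} {F G : X -> R} {x z : X} {s : R} :
  0 <= alpha -> 0 <= beta -> in_dual_ball F -> in_dual_ball G ->
  `|x| <= 1 -> `|z| <= 1 -> 0 <= G x -> 0 < s <= 2^-1 -> 1 - s ^+ 2 <= F x ->
  s < G x * F z - G z ->
  (((alpha + beta * (1 - s)) * (G x * F z - G z - s))%:E <= DW X alpha beta)%E.
Proof.
move=> alpha_ge0 beta_ge0 hF hG x1 z1 Gx_ge0 /andP[s_gt0 s_half] Fx_ge gap.
set u := x + s *: z.
have nx_ge : 1 - s ^+ 2 <= `|x| := le_trans Fx_ge (dual_ball_le_norm hF x).
have x0 : x != 0 by rewrite -normr_gt0; apply: lt_le_trans nx_ge; nra.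
have z0 : z != 0.
  by apply: contraTneq gap => ->; rewrite (dual_ball0 hF) (dual_ball0 hG); lra.
have ux : u - x = s *: z by rewrite /u addrAC subrr add0r.
have u_neq_x : u != x by rewrite -subr_eq0 ux scaler_eq0 negb_or gt_eqF.
have nu_le : `|u| <= `|x| + s.
  apply: le_trans (ler_normD _ _) _; rewrite normrZ gtr0_norm // lerD2l.
  by rewrite -[leRHS]mulr1 ler_pM2l.
have nu_gt0 : 0 < `|u|.
  apply: lt_le_trans (dual_ball_le_norm hF u).
  have := dual_ball_ge_Nnorm hF z; rewrite dual_ballD // dual_ballZ //; nra.
have nu_ratio : (1 - s) * `|u| <= `|x| by nra.
have u0 : u != 0 by rewrite -normr_gt0.
have gapN := perturbation_gap_le hF hG x1 Gx_ge0 x0 u0 Fx_ge.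
apply: le_trans (DW_ge_pair alpha beta u x u0 x0 u_neq_x).
set N := `| _ | in gapN *; set h := _ - _ - s in gapN *.
have coef_ge0 : 0 <= alpha + beta * (1 - s) by nra.
have target_ge0 : 0 <= (alpha + beta * (1 - s)) * h by rewrite mulr_ge0 // subr_ge0 ltW.
have P_ge : s * ((alpha + beta * (1 - s)) * h) <= (alpha * `|u| + beta * `|x|) * N.
  have := ler_wpM2l coef_ge0 gapN.
  have N_ge0 : 0 <= N by exact: normr_ge0.
  have := ler_wpM2r N_ge0 (ler_wpM2l beta_ge0 nu_ratio); lra.
rewrite lee_fin ux normrZ gtr0_norm // mulrAC ler_pdivlMr; last first.
  by rewrite mulr_gt0 // normr_gt0.
have := ler_wpM2l target_ge0 z1; nra.
Qed.

End Perturbation.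

Lemma perturbation_size_exists {R : realFieldType} {q q' : R} : 0 <= q -> q < q' ->
  exists s, [/\ 0 < s <= 2^-1, s <= q' & q <= (1 - s) * (q' - s)].
Proof.
move=> q_ge0 qq'; set s := (q' - q) / (2 * (1 + q')).
have sE : s * (2 * (1 + q')) = q' - q by rewrite /s mulfVK //; lra.
have s_gt0 : 0 < s by rewrite divr_gt0 //; lra.
exists s; split; [apply/andP; split | |]; nra.
Qed.

Lemma DW_ge_dual_norm {R : realType} {X : normedModType R} {alpha beta : R}
    {F G : X -> R} {x : X} {s r : R} :
  0 <= alpha -> 0 <= beta -> in_dual_ball F -> in_dual_ball G ->
  `|x| <= 1 -> 0 <= G x -> 0 < s <= 2^-1 -> 1 - s ^+ 2 <= F x -> s <= r ->
  r < dual_norm (fun z => G x * F z - G z) ->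
  (((alpha + beta) * ((1 - s) * (r - s)))%:E <= DW X alpha beta)%E.
Proof.
move=> alpha_ge0 beta_ge0 hF hG x1 Gx_ge0 s01 Fx_ge sr.
have h_odd z : G x * F (- z) - G (- z) = - (G x * F z - G z).
  by rewrite (dual_ballN hF) (dual_ballN hG); ring.
move=> /(dual_norm_gt_odd _ _ h_odd)[z z1 rz]; have /andP[s_gt0 s_half] := s01.
apply: le_trans (DW_ge_perturbation alpha_ge0 beta_ge0 hF hG x1 z1 Gx_ge0 s01 Fx_ge _);
  last by apply: le_lt_trans rz.
rewrite lee_fin; set h := _ - _ - s.
have h_ge : r - s <= h by rewrite /h lerD2r ltW.
have coef_ge : (alpha + beta) * (1 - s) <= alpha + beta * (1 - s) by nra.
have coef_ge0 : 0 <= (alpha + beta) * (1 - s) by apply: mulr_ge0; lra.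
have h_ge0 : 0 <= h by lra.
have := ler_wpM2l coef_ge0 h_ge; have := ler_wpM2r h_ge0 coef_ge.
rewrite mulrA; lra.
Qed.

Lemma limn_einf_max1_le (R : realType) (u v : (\bar R)^nat) :
  (\forall n \near \oo, (u n <= Order.max (v n) 1)%E) ->
  (Order.max (limn_einf u) 1 <= Order.max (limn_einf v) 1)%E.
Proof.
move=> uv; apply: lee_of_fin_lt => r; rewrite lt_max le_max.
have [r_lt1|r_ge1] := ltrP r 1; first by move=> _; apply/orP; right; rewrite lee_fin ltW.
rewrite [(r%:E < 1)%E]lte_fin [r < 1]ltNge r_ge1 orbF => /limn_einf_gt ru.
apply/orP; left; apply: limn_einf_ge; near=> n.
have run : (r%:E < u n)%E by near: n.
have uvn : (u n <= Order.max (v n) 1)%E by near: n.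
have := lt_le_trans run uvn; rewrite lt_max => /orP[/ltW //|].
by rewrite lte_fin ltNge r_ge1.
Unshelve. all: by end_near.
Qed.

Lemma DW_ge_max_limn_einf (R : realType) (X : normedModType R)
    (alpha beta : R) (f g : nat -> X -> R) (x : nat -> X) :
  dim_ge2 X -> 0 < alpha -> 0 < beta ->
  (forall n, in_dual_ball (f n)) -> (forall n, in_ball (x n)) ->
  (fun n => f n (x n)) @ \oo --> (1 : R) ->
  (forall n, in_dual_ball (g n)) ->
  (0 < limn_einf (fun n => (g n (x n))%:E))%E ->
  ((alpha + beta)%:E * Order.max (limn_einf (fun n =>
     (dual_norm (fun z => g n (x n) * f n z - g n z))%:E)) 1 <= DW X alpha beta)%E.
Proof.
move=> dim2 alpha_gt0 beta_gt0 hf hx fx_cvg1 hg gx_pos.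
have ab_gt0 : 0 < alpha + beta by lra.
have DW_ge := DW_ge_add alpha beta dim2.
rewrite maxe_pMr //; last by rewrite lee_fin ltW.
rewrite mule1 ge_max DW_ge andbT.
apply: lee_of_fin_lt => r.
have [r_le0|r_gt0] := lerP r 0; first by move=> _; apply: le_trans DW_ge; rewrite lee_fin; lra.
rewrite -lte_pdivrMl // -EFinM; set q := _ * r => qL.
have q_gt0 : 0 < q by rewrite mulr_gt0 ?invr_gt0.
have [q' qq' q'L] := lte_fin_dense qL.
have [s [s01 sq' q_le]] := perturbation_size_exists (ltW q_gt0) qq'.
have /andP[s_gt0 _] := s01.
have fx_near : \forall n \near \oo, `|1 - f n (x n)| <= s ^+ 2.
  by move/cvgrPdist_le : fx_cvg1; apply; rewrite exprn_gt0.
have /filter_ex[n [fxn gxn dnn]] : \forall n \near \oo,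
    [/\ 1 - s ^+ 2 <= f n (x n), 0 < g n (x n) &
         q' < dual_norm (fun z => g n (x n) * f n z - g n z)].
  near=> n; split.
  - suff : `|1 - f n (x n)| <= s ^+ 2 by move/ler_normlP => []; lra.
    by near: n.
  - by rewrite -lte_fin; near: n; apply: limn_einf_gt.
  - by rewrite -lte_fin; near: n; apply: limn_einf_gt.
apply: le_trans (DW_ge_dual_norm (ltW alpha_gt0) (ltW beta_gt0) (hf n) (hg n)
  (hx n) (ltW gxn) s01 fxn sq' dnn).
by rewrite lee_fin -[r](mulVKf (lt0r_neq0 ab_gt0)) -/q ler_pM2l.
Unshelve. all: by end_near.
Qed.

Lemma max_limn_einf_scaled_sub_le (R : realType) (X : normedModType R)
    (f g : nat -> X -> R) (x : nat -> X) :
  (forall n, in_dual_ball (f n)) -> (forall n, in_ball (x n)) ->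
  (forall n, in_dual_ball (g n)) ->
  (0 < limn_einf (fun n => (g n (x n))%:E))%E ->
  (Order.max (limn_einf (fun n =>
     (g n (x n) * dual_norm (fun z => f n z - g n z))%:E)) 1 <=
   Order.max (limn_einf (fun n =>
     (dual_norm (fun z => g n (x n) * f n z - g n z))%:E)) 1)%E.
Proof.
move=> hf hx hg gx_pos; apply: limn_einf_max1_le.
have := limn_einf_gt gx_pos; apply: filterS => n gxn.
rewrite -EFin_max lee_fin dual_norm_scaled_sub_le //.
by rewrite -lte_fin gxn (le_trans (dual_ball_le_norm (hg n) _) (hx n)).
Qed.

Theorem lemma1 (R : realType) (X : completeNormedModType R)
  (alpha beta : R) (f g : nat -> X -> R) (x : nat -> X) :
  dim_ge2 X -> 0 < alpha -> 0 < beta ->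
  (forall n, in_dual_ball (f n)) -> (forall n, in_ball (x n)) ->
  (fun n => f n (x n)) @ \oo --> (1 : R) ->
  (forall n, in_dual_ball (g n)) ->
  (0 < limn_einf (fun n => (g n (x n))%:E))%E ->
  ((DW X alpha beta >=
      (alpha + beta)%:E *
        Order.max (limn_einf (fun n =>
           (dual_norm (fun z => g n (x n) * f n z - g n z))%:E)) 1%:E) /\
   ((alpha + beta)%:E *
        Order.max (limn_einf (fun n =>
           (dual_norm (fun z => g n (x n) * f n z - g n z))%:E)) 1 >=
    (alpha + beta)%:E *
        Order.max (limn_einf (fun n =>
           (g n (x n) * dual_norm (fun z => f n z - g n z))%:E)) 1%:E))%E.
Proof.
move=> dim2 alpha_gt0 beta_gt0 hf hx fx_cvg1 hg gx_pos; split.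
  exact: DW_ge_max_limn_einf.
apply: lee_wpmul2l; first by rewrite lee_fin; lra.
exact: max_limn_einf_scaled_sub_le.
Qed.
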